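(* Let $\lambda\ge0$, $\delta>0$, $0<a<b$, let $\rho_c$ and $D$ be as in the context, let $0\le\eta<\infty$, let $Q$ be regular superadditive, and let $q\colon\mathbb{R}\times\mathbb{R}\to[0,\infty]$ be measurable. Assume that for all $s<t$ and $x<y$, $$D\int_s^t\int_{\mathbb{R}}\Big[\rho_{b-a}(s,x,u,z)+\rho_a(u,z,t,y)\Big]q(u,z)\,dz\,du\le\eta+Q(s,t).$$ Then $q\in\mathcal N(\rho_b,\rho_a,(b/a)^{1/2},\eta,Q)$.
   Context: For $t>0$, $z\in\mathbb{R}$ let $p(t,z)=(4\pi)^{-1/2}\delta t z^{-3/2}\exp\{-(\delta t-2\sqrt{\lambda}z)^2/(4z)\}\mathbf 1_{z>0}$; for $c>0$, $\rho_c(s,x,t,y)=c\,p(c(t-s),c(y-x))$ if $s<t$ and $0$ otherwise. $D=\left(\frac{b}{b-a}\right)^{3/2}\exp[\frac32 l(\frac{a}{b-a})]$ with $l(\alpha)=\max_{\tau\ge\alpha\vee1/\alpha}[\ln(1+\tau)-\frac{\tau-\alpha}{1+\tau}\ln(\alpha\tau)]$. $Q\colon\{(s,t):s<t\}\to[0,\infty)$ is regular superadditive if $Q(s,u)+Q(u,t)\le Q(s,t)$ for $s<u<t$ and $Q(s,t)$ is right-continuous in $s$ and left-continuous in $t$. For transition densities $p,p^*$ on $\mathbb{R}$, $C\ge1$, $\eta\in[0,\infty)$ and regular superadditive $Q$, we write $q\in\mathcal N(p,p^*,C,\eta,Q)$ if $q\ge0$ is measurable on $\mathbb{R}\times\mathbb{R}$,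 $\int_s^t\int_{\mathbb{R}}p(s,x,u,z)q(u,z)p^*(u,z,t,y)\,dz\,du\le[\eta+Q(s,t)]p^*(s,x,t,y)$ for all $s<t$, $x,y$, and $p\le Cp^*$ everywhere. *)

From HB Require Import structures.
From mathcomp Require Import all_boot all_order all_algebra.
From mathcomp Require Import all_classical all_reals all_analysis.
From mathcomp Require Import measurable_realfun.
Set Implicit Arguments. Unset Strict Implicit. Unset Printing Implicit Defensive.
Import Order.TTheory GRing.Theory Num.Theory.
Import numFieldNormedType.Exports.
Local Open Scope classical_set_scope.
Local Open Scope ring_scope.

Section Defs.
Variable R : realType.

Definition pdens (lam del t z : R) : R :=
  if 0 < z then
    (Num.sqrt (4 * pi))^-1 * del * t * z `^ (- (3 / 2))
      * expR (- ((del * t - 2 * Num.sqrt lam * z) ^+ 2) / (4 * z))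
  else 0.

Definition rho (lam del c s x t y : R) : R :=
  if s < t then c * pdens lam del (c * (t - s)) (c * (y - x)) else 0.

Definition lfun (alpha : R) : R :=
  sup [set ln (1 + tau) - (tau - alpha) / (1 + tau) * ln (alpha * tau)
      | tau in [set tau | Num.max alpha alpha^-1 <= tau]].

Definition Dconst (a b : R) : R :=
  (b / (b - a)) `^ (3 / 2) * expR (3 / 2 * lfun (a / (b - a))).

Definition regular_superadditive (Q : R -> R -> R) : Prop :=
  [/\ (forall s t, s < t -> 0 <= Q s t),
      (forall s u t, s < u -> u < t -> Q s u + Q u t <= Q s t),
      (forall s t, s < t -> Q s' t @[s' --> s^'+] --> Q s t)
    & (forall s t, s < t -> Q s t' @[t' --> t^'-] --> Q s t)].

Definition in_N (p ps : R -> R -> R -> R -> R) (C eta : R) (Q : R -> R -> R)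
    (q : R * R -> \bar R) : Prop :=
  [/\ [/\ 1 <= C, 0 <= eta & regular_superadditive Q],
      (forall uz, (0 <= q uz)%E) /\ measurable_fun [set: R * R] q,
      (forall s t x y, s < t ->
        (\int[lebesgue_measure]_(u in `[s, t])
           \int[lebesgue_measure]_(z in [set: R])
              ((p s x u z)%:E * q (u, z) * (ps u z t y)%:E)
         <= (eta + Q s t)%:E * (ps s x t y)%:E)%E)
    & (forall s x t y, p s x t y <= C * ps s x t y)].

End Defs.

(* Write rho_c(s,x,t,y) = (4 pi)^(-1/2) del expR (log_rho c (t-s) (y-x) w) with
   w = del (t-s) - 2 sqrt(lam) (y-x). Everything rests on the pointwise 3P inequality
     rho_b(s,x,u,z) rho_a(u,z,t,y) <= D rho_a(s,x,t,y) (rho_(b-a)(s,x,u,z) + rho_a(u,z,t,y)).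
   In logarithmic form, bound the maximum of the two log-densities on the right from
   below by their convex combination with weight u = min(1, b Z2 / ((b-a)(Z1+Z2))):
   the time terms are then controlled by monotonicity of ln, the space terms by an
   entropy inequality, the Gaussian terms by Cauchy-Schwarz, and the remaining
   constants by ln D, through l(alpha) >= ln(1 + max(alpha, 1/alpha)). Multiplying by
   q and integrating turns the hypothesis into the defining inequality of N, while
   rho_b <= (b/a)^(1/2) rho_a is read off the explicit density. *)

From HB Require Import structures.
From mathcomp Require Import all_boot all_order all_algebra.
From mathcomp Require Import all_classical all_reals all_analysis.
From mathcomp Require Import measurable_realfun.
From mathcomp Require Import ring lra.
Import Order.TTheory GRing.Theory Num.Theory.
Import numFieldNormedType.Exports.
Set Implicit Arguments.
Unset Strict Implicit.
Unset Printing Implicit Defensive.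

Local Open Scope classical_set_scope.
Local Open Scope ring_scope.

(* The library versions of these lemmas assume measurable integrands; for nonnegative
   integrands they hold in general, the integral being a supremum over simple minorants. *)
Section NonnegIntegral.
Context d (T : measurableType d) (R : realType) (mu : {measure set T -> \bar R}).
Local Open Scope ereal_scope.
Import HBNNSimple.

Lemma le_integral_ge0 (D : set T) (f g : T -> \bar R) :
  (forall x, D x -> 0 <= f x) -> (forall x, D x -> f x <= g x) ->
  \int[mu]_(x in D) f x <= \int[mu]_(x in D) g x.
Proof.
move=> f0 fg; have g0 x : D x -> 0 <= g x by move=> Dx; rewrite (le_trans (f0 _ Dx)) ?fg.
rewrite (ge0_integralE mu f0) (ge0_integralE mu g0).
apply: ereal_sup_le => _ [h hf <-]; exists h => //= x.
apply: le_trans (hf x) _; rewrite /patch; case: ifPn => // /[!inE] Dx.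
exact: fg.
Qed.

Lemma integralZl_le_ge0 (D : set T) (f : T -> \bar R) (k : R) :
  (0 <= k)%R -> (forall x, D x -> 0 <= f x) ->
  \int[mu]_(x in D) (k%:E * f x) <= k%:E * \int[mu]_(x in D) f x.
Proof.
move=> k0 f0; have [->|kn0] := eqVneq k 0%R.
  by rewrite mul0e integral0_eq // => x _; rewrite mul0e.
have kf0 x : D x -> 0 <= k%:E * f x by move=> Dx; rewrite mule_ge0 ?f0.
rewrite (ge0_integralE mu kf0) (ge0_integralE mu f0).
apply: ge_ereal_sup => _ [h hf <-].
have kV0 : (0 <= k^-1)%R by rewrite invr_ge0.
pose h' := scale_nnsfun h kV0.
have -> : sintegral mu h = k%:E * sintegral mu h'.
  rewrite (_ : NonNegSimpleFun.sort h' = (cst k^-1 \* h)%R) //.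
  by rewrite sintegralrM muleA -EFinM mulfV // mul1e.
rewrite lee_wpmul2l ?lee_fin //; apply: ereal_sup_ubound; exists h' => //= x.
have := hf x; rewrite erestrict_scale /= => hx.
rewrite EFinM -[_ \_ D x](@mul1e _ _) -(mulVf kn0) EFinM -muleA.
by rewrite lee_wpmul2l ?lee_fin.
Qed.

Lemma integral_le_scale_ge0 (D : set T) (f g : T -> \bar R) (k : R) :
  (0 <= k)%R -> (forall x, D x -> 0 <= f x) -> (forall x, D x -> 0 <= g x) ->
  (forall x, D x -> f x <= k%:E * g x) ->
  \int[mu]_(x in D) f x <= k%:E * \int[mu]_(x in D) g x.
Proof.
move=> k0 f0 g0 fkg.
by rewrite (le_trans (le_integral_ge0 f0 fkg)) ?integralZl_le_ge0.
Qed.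

End NonnegIntegral.

Section Elementary.
Variable R : realType.
Implicit Types x y : R.

Lemma ln_le_subr1 x : 0 < x -> ln x <= x - 1.
Proof. by move=> x0; have := @le_ln1Dx R (x - 1); rewrite (addrC 1) subrK; apply; lra. Qed.

Lemma sqr_addr_div_le (w1 w2 Z1 Z2 : R) : 0 < Z1 -> 0 < Z2 ->
  (w1 + w2) ^+ 2 / (Z1 + Z2) <= w1 ^+ 2 / Z1 + w2 ^+ 2 / Z2.
Proof.
move=> Z10 Z20; have Z0 : 0 < Z1 + Z2 by rewrite addr_gt0.
rewrite -subr_ge0.
have -> : w1 ^+ 2 / Z1 + w2 ^+ 2 / Z2 - (w1 + w2) ^+ 2 / (Z1 + Z2) =
    (w1 * Z2 - w2 * Z1) ^+ 2 / (Z1 * Z2 * (Z1 + Z2)).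
  by field; rewrite !gt_eqF.
by rewrite divr_ge0 ?sqr_ge0 // ltW // !mulr_gt0.
Qed.

Lemma convex_le_max x y u : 0 <= u <= 1 -> u * x + (1 - u) * y <= Num.max x y.
Proof.
case/andP=> u0 u1.
have xm : x <= Num.max x y by rewrite le_max lexx.
have ym : y <= Num.max x y by rewrite le_max lexx orbT.
nra.
Qed.

Lemma expRD_max_le k x y : expR (k + Num.max x y) <= expR (k + x) + expR (k + y).
Proof. by case: (leP x y) => _; rewrite ?lerDr ?lerDl expR_ge0. Qed.

Lemma cube_add2_le (al : R) : 0 < al ->
  (2 + al) ^+ 3 <= (1 + al) ^+ 3 * (1 + Num.max al al^-1) ^+ 2.
Proof.
move=> al0; case: (leP 1 al) => h.
  rewrite max_l; last by rewrite (le_trans _ h) // invf_le1.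
  have h3 : 0 <= (al - 1) * al ^+ 3 by rewrite mulr_ge0 ?subr_ge0 // exprn_ge0 // ltW.
  nra.
rewrite max_r; last by rewrite (le_trans (ltW h)) // invf_ge1 // ltW.
have -> : 1 + al^-1 = (1 + al) / al by field; rewrite gt_eqF.
rewrite expr_div_n mulrA ler_pdivlMr ?exprn_gt0 //.
nra.
Qed.

Lemma cross_entropy_min_le (k p : R) : 1 <= k -> 0 < p < 1 ->
  - (Num.min 1 (k * p) * ln p) - (1 - Num.min 1 (k * p)) * ln (1 - p)
    <= ln (1 + k).
Proof.
move=> k1 /andP[p0 p1]; have k0 : 0 < 1 + k by lra.
have q0 : 0 < 1 - p by lra.
case: (leP 1 (k * p)) => kp.
  rewrite subrr mul0r subr0 mul1r.
  have : 0 <= ln ((1 + k) * p) by rewrite ln_ge0 //; nra.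
  by rewrite lnM ?posrE //; lra.
(* Jensen for ln, through its tangent lines at 1/((1+k)p) and 1/((1+k)(1-p)). *)
have lnp : ln (((1 + k) * p)^-1) <= ((1 + k) * p)^-1 - 1.
  by rewrite ln_le_subr1 // invr_gt0 mulr_gt0.
have lnq : ln (((1 + k) * (1 - p))^-1) <= ((1 + k) * (1 - p))^-1 - 1.
  by rewrite ln_le_subr1 // invr_gt0 mulr_gt0.
rewrite !lnV ?posrE ?mulr_gt0 // !lnM ?posrE // in lnp lnq.
have kp0 : 0 <= k * p by rewrite mulr_ge0 // ltW //; lra.
have Hp := ler_wpM2l kp0 lnp.
have kp1 : 0 <= 1 - k * p by lra.
have Hq := ler_wpM2l kp1 lnq.
have e1 : k * p * (((1 + k) * p)^-1 - 1) = k / (1 + k) - k * p.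
  by field; rewrite !gt_eqF.
have e2 : (1 - k * p) * ((1 + k) * (1 - p))^-1 <= (1 + k)^-1.
  have -> : (1 + k)^-1 = (1 - p) * ((1 + k) * (1 - p))^-1.
    by field; rewrite !gt_eqF.
  by apply: ler_wpM2r; [rewrite invr_ge0 mulr_ge0 //; lra | nra].
have e3 : k / (1 + k) + (1 + k)^-1 = 1 by field; rewrite gt_eqF.
lra.
Qed.

End Elementary.

Section Constant.
Variable R : realType.
Implicit Types a b al : R.

Lemma lfun_ge al : 0 < al -> ln (1 + Num.max al al^-1) <= lfun al.
Proof.
move=> al0; set m := Num.max al al^-1.
have alm : al <= m by rewrite le_max lexx.
have alVm : al^-1 <= m by rewrite le_max lexx orbT.
rewrite /lfun; set E := [set _ | _ in _].
have Em : E (ln (1 + m)).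
  exists m; first exact: lexx.
  rewrite /m; case: (leP al^-1 al) => _; first by rewrite subrr !mul0r subr0.
  by rewrite divff ?gt_eqF // ln1 mulr0 subr0.
apply: (sup_upper_bound _ Em); split; first by exists (ln (1 + m)).
exists (al * (1 + al) + al^-1) => _ [tau /= mtau <-]; rewrite -/m in mtau.
have tau0 : 0 < tau by rewrite (lt_le_trans al0) // (le_trans alm mtau).
have altau1 : 1 <= al * tau.
  by rewrite -(mulfV (lt0r_neq0 al0)) ler_wpM2l ?(ltW al0) // (le_trans alVm mtau).
have altau0 : 0 < al * tau by rewrite mulr_gt0.
have tau10 : 0 < 1 + tau by lra.
set L := ln (al * tau).
have L0 : 0 <= L by exact: ln_ge0.
have Lle : L <= al * tau - 1 by exact: ln_le_subr1.
have -> : ln (1 + tau) - (tau - al) / (1 + tau) * L =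
    L * ((1 + al) / (1 + tau)) + (ln (1 + tau) - L).
  by field; rewrite gt_eqF.
have h1 : L * ((1 + al) / (1 + tau)) <= al * (1 + al).
  apply: le_trans (_ : (al * tau - 1) * ((1 + al) / (1 + tau)) <= _).
    by rewrite ler_wpM2r // divr_ge0 //; lra.
  rewrite mulrA ler_pdivrMr //; nra.
have h2 : ln (1 + tau) - L <= (al * tau)^-1 + al^-1 - 1.
  rewrite /L -ln_div ?posrE //.
  have -> : (al * tau)^-1 + al^-1 - 1 = (1 + tau) / (al * tau) - 1.
    by field; rewrite !gt_eqF.
  by rewrite ln_le_subr1 // divr_gt0.
have : (al * tau)^-1 <= 1 by rewrite invf_le1.
lra.
Qed.

Lemma Dconst_gt0 a b : 0 < a -> a < b -> 0 < Dconst a b.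
Proof.
move=> a0 ab; have ba0 : 0 < b - a by rewrite subr_gt0.
by rewrite /Dconst mulr_gt0 ?powR_gt0 ?expR_gt0 // divr_gt0 // (lt_trans a0).
Qed.

Lemma ln_Dconst_ge a b : 0 < a -> a < b ->
  Num.max (ln (b / (b - a))) (ln (b / a)) / 2 + 3 / 2 * ln ((2 * b - a) / (b - a))
    <= ln (Dconst a b).
Proof.
move=> a0 ab; have ba0 : 0 < b - a by rewrite subr_gt0.
rewrite /Dconst; set al := a / (b - a); have al0 : 0 < al by rewrite divr_gt0.
have al10 : 0 < 1 + al by lra.
have -> : b / (b - a) = 1 + al by rewrite /al; field; rewrite gt_eqF.
have -> : b / a = 1 + al^-1 by rewrite /al; field; rewrite !gt_eqF.
have -> : (2 * b - a) / (b - a) = 2 + al by rewrite /al; field; rewrite gt_eqF.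
rewrite lnM ?posrE ?powR_gt0 ?expR_gt0 // ln_powR expRK.
have hl := lfun_ge al0; set m := Num.max al al^-1 in hl.
have m10 : 0 < 1 + m by rewrite addr_gt0 // lt_max al0.
have hc : 3 * ln (2 + al) <= 3 * ln (1 + al) + 2 * ln (1 + m).
  have al20 : 0 < 2 + al by lra.
  have : ln ((2 + al) ^+ 3) <= ln ((1 + al) ^+ 3 * (1 + m) ^+ 2).
    by rewrite ler_ln ?posrE ?exprn_gt0 1?mulr_gt0 ?exprn_gt0 //; exact: cube_add2_le.
  have lnX n x : 0 < x -> ln (x ^+ n) = n%:R * ln x.
    by move=> x0; rewrite lnXn // mulr_natl.
  by rewrite lnM ?posrE ?exprn_gt0 // !lnX //; lra.
have hM : Num.max (ln (1 + al)) (ln (1 + al^-1)) <= ln (1 + m).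
  have alV10 : 0 < 1 + al^-1 by rewrite addr_gt0 // invr_gt0.
  by rewrite ge_max !ler_ln ?posrE // !lerD2l /m !le_max !lexx ?orbT.
lra.
Qed.

End Constant.

Section LogKernel.
Variable R : realType.
Implicit Types a b : R.

Definition log_rho (c T Z w : R) : R :=
  ln c / 2 + ln T - 3 / 2 * ln Z - c * w ^+ 2 / Z / 4.

(* The convex weight for which the Gaussian parts of the log-densities recombine
   into a square. *)
Definition weight_3P a b (Z1 Z2 : R) : R := Num.min 1 (b / (b - a) * (Z2 / (Z1 + Z2))).

Lemma weight_3P_ge0_le1 a b (Z1 Z2 : R) : 0 < a -> a < b -> 0 < Z1 -> 0 < Z2 ->
  0 <= weight_3P a b Z1 Z2 <= 1.
Proof.
move=> a0 ab Z10 Z20; have ba0 : 0 < b - a by rewrite subr_gt0.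
have b0 : 0 < b by rewrite (lt_trans a0).
rewrite /weight_3P ge_min lexx andbT le_min ler01 /=.
by apply: mulr_ge0; apply: divr_ge0; lra.
Qed.

Lemma sqr_add_weight_3P_le a b (Z1 Z2 w1 w2 : R) : 0 < a -> a < b -> 0 < Z1 -> 0 < Z2 ->
  a * (w1 + w2) ^+ 2 / (Z1 + Z2) <=
    (b - weight_3P a b Z1 Z2 * (b - a)) * w1 ^+ 2 / Z1
      + weight_3P a b Z1 Z2 * a * w2 ^+ 2 / Z2.
Proof.
move=> a0 ab Z10 Z20; have ba0 : 0 < b - a by rewrite subr_gt0.
have b0 : 0 < b by rewrite (lt_trans a0).
rewrite /weight_3P; case: (leP 1 _) => _.
  have -> : b - 1 * (b - a) = a by ring.
  have := sqr_addr_div_le w1 w2 Z10 Z20.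
  by rewrite -(ler_pM2l a0) mulrDr !mulrA !mul1r.
have ab0 : 0 < a / b by rewrite divr_gt0.
have bab0 : 0 < (b - a) / b by rewrite divr_gt0.
have Z0 : 0 < Z1 + Z2 by rewrite addr_gt0.
rewrite -subr_ge0.
have -> : (b - b / (b - a) * (Z2 / (Z1 + Z2)) * (b - a)) * w1 ^+ 2 / Z1
    + b / (b - a) * (Z2 / (Z1 + Z2)) * a * w2 ^+ 2 / Z2 - a * (w1 + w2) ^+ 2 / (Z1 + Z2)
  = a / (Z1 + Z2) * (w1 ^+ 2 / (a / b) + w2 ^+ 2 / ((b - a) / b)
                     - (w1 + w2) ^+ 2 / (a / b + (b - a) / b)).
  by field; rewrite !gt_eqF.
apply: mulr_ge0; first by rewrite divr_ge0 ?ltW.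
by rewrite subr_ge0 sqr_addr_div_le.
Qed.

Lemma log_rho_3P a b (T1 T2 Z1 Z2 w1 w2 : R) :
  0 < a -> a < b -> 0 < T1 -> 0 < T2 -> 0 < Z1 -> 0 < Z2 ->
  log_rho b T1 Z1 w1 + log_rho a T2 Z2 w2 <=
    ln (Dconst a b) + log_rho a (T1 + T2) (Z1 + Z2) (w1 + w2)
      + Num.max (log_rho (b - a) T1 Z1 w1) (log_rho a T2 Z2 w2).
Proof.
move=> a0 ab T10 T20 Z10 Z20.
have b0 : 0 < b by rewrite (lt_trans a0).
have ba0 : 0 < b - a by rewrite subr_gt0.
have Z0 : 0 < Z1 + Z2 by rewrite addr_gt0.
pose k := b / (b - a); pose p := Z2 / (Z1 + Z2); pose u := weight_3P a b Z1 Z2.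
have u01 : 0 <= u <= 1 by exact: weight_3P_ge0_le1.
have hmax := convex_le_max (log_rho (b - a) T1 Z1 w1) (log_rho a T2 Z2 w2) u01.
have hc := convex_le_max (ln (b / (b - a))) (ln (b / a)) u01.
have hD := ln_Dconst_ge a0 ab.
have hG := sqr_add_weight_3P_le w1 w2 a0 ab Z10 Z20; rewrite -/u in hG.
have hZ : - (u * ln p) - (1 - u) * ln (1 - p) <= ln (1 + k).
  apply: cross_entropy_min_le; first by rewrite /k ler_pdivlMr // mul1r; lra.
  by rewrite divr_gt0 // ltr_pdivrMr // mul1r ltrDr.
have hT : (1 - u) * ln T1 + u * ln T2 <= ln (T1 + T2).
  have lT1 : ln T1 <= ln (T1 + T2) by rewrite ler_ln ?posrE ?addr_gt0 // lerDl ltW.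
  have lT2 : ln T2 <= ln (T1 + T2) by rewrite ler_ln ?posrE ?addr_gt0 // lerDr ltW.
  case/andP: u01 => u0 u1; nra.
have ek : 1 + k = (2 * b - a) / (b - a) by rewrite /k; field; rewrite gt_eqF.
have ep : 1 - p = Z1 / (Z1 + Z2) by rewrite /p; field; rewrite gt_eqF.
have b2a0 : 0 < 2 * b - a by lra.
rewrite ek ep !ln_div ?posrE // in hZ hD hc.
clearbody u; rewrite /log_rho in hmax *.
lra.
Qed.

End LogKernel.

Section Kernel.
Variables (R : realType) (lam del : R).
Hypothesis del0 : 0 < del.

Lemma rho_expR (c s x t y : R) : 0 < c -> s < t -> x < y ->
  rho lam del c s x t y = expR (ln ((Num.sqrt (4 * pi))^-1 * del)
    + log_rho c (t - s) (y - x) (del * (t - s) - 2 * Num.sqrt lam * (y - x))).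
Proof.
move=> c0 st xy.
have T0 : 0 < t - s by rewrite subr_gt0.
have Z0 : 0 < y - x by rewrite subr_gt0.
have cZ0 : 0 < c * (y - x) by rewrite mulr_gt0.
have K0 : 0 < (Num.sqrt (4 * pi))^-1 :> R.
  by rewrite invr_gt0 sqrtr_gt0 mulr_gt0 ?pi_gt0.
rewrite /rho st /pdens cZ0.
set E := expR _; have E0 : 0 < E by rewrite expR_gt0.
set P := _ `^ _; have P0 : 0 < P by rewrite powR_gt0.
rewrite -[LHS]lnK ?posrE ?mulr_gt0 //; congr expR.
rewrite !lnM ?posrE ?mulr_gt0 // /P ln_powR /E expRK /log_rho !lnM ?posrE //.
by field; rewrite !gt_eqF.
Qed.

Lemma rho_eq0 (c s x t y : R) : 0 < c -> ~~ (s < t) || ~~ (x < y) ->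
  rho lam del c s x t y = 0.
Proof.
move=> c0 /orP[st|xy]; rewrite /rho; first by rewrite (negbTE st).
by case: ifP => // _; rewrite /pdens pmulr_rgt0 // subr_gt0 (negbTE xy) mulr0.
Qed.

Lemma rho_ge0 (c s x t y : R) : 0 < c -> 0 <= rho lam del c s x t y.
Proof.
move=> c0; have [/andP[st xy]|] := boolP ((s < t) && (x < y)).
  by rewrite rho_expR // expR_ge0.
by rewrite negb_and => /(rho_eq0 c0) ->.
Qed.

Lemma rho_le_sqrt_ratio (a b s x t y : R) : 0 < a -> a <= b ->
  rho lam del b s x t y <= Num.sqrt (b / a) * rho lam del a s x t y.
Proof.
move=> a0 ab; have b0 : 0 < b by rewrite (lt_le_trans a0).
have [/andP[st xy]|] := boolP ((s < t) && (x < y)); last first.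
  by rewrite negb_and => h; rewrite !rho_eq0 ?mulr0.
have -> : Num.sqrt (b / a) = expR (ln b / 2 - ln a / 2).
  rewrite -[LHS]lnK ?posrE ?sqrtr_gt0 ?divr_gt0 //.
  by rewrite -powR12_sqrt ?divr_ge0 ?ltW // ln_powR ln_div ?posrE //; congr expR; lra.
rewrite !rho_expR // -expRD ler_expR /log_rho.
set w := del * (t - s) - 2 * Num.sqrt lam * (y - x).
have Z0 : 0 < y - x by rewrite subr_gt0.
have hw : 0 <= w ^+ 2 / (y - x) / 4 by rewrite !divr_ge0 ?sqr_ge0 // ltW.
have := ler_wpM2r hw ab.
lra.
Qed.

Lemma rho_3P (a b s x u z t y : R) : 0 < a -> a < b ->
  rho lam del b s x u z * rho lam del a u z t y <=
  Dconst a b * rho lam del a s x t y *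
    (rho lam del (b - a) s x u z + rho lam del a u z t y).
Proof.
move=> a0 ab; have b0 : 0 < b by rewrite (lt_trans a0).
have ba0 : 0 < b - a by rewrite subr_gt0.
have D0 := Dconst_gt0 a0 ab.
have [/and4P[su ut xz zy]|not_all] := boolP [&& s < u, u < t, x < z & z < y]; last first.
  have RHS0 : 0 <= Dconst a b * rho lam del a s x t y *
      (rho lam del (b - a) s x u z + rho lam del a u z t y).
    apply: mulr_ge0; first by rewrite mulr_ge0 ?rho_ge0 // ltW.
    by rewrite addr_ge0 ?rho_ge0.
  have [/andP[su xz]|h] := boolP ((s < u) && (x < z)).
    rewrite su xz /= negb_and in not_all.
    by apply: le_trans RHS0; rewrite (rho_eq0 a0 not_all) mulr0.
  rewrite negb_and in h.
  by apply: le_trans RHS0; rewrite (rho_eq0 b0 h) mul0r.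
rewrite !rho_expR // ?(lt_trans su ut) ?(lt_trans xz zy) //.
have -> : t - s = (u - s) + (t - u) by ring.
have -> : y - x = (z - x) + (y - z) by ring.
set w1 := del * (u - s) - 2 * Num.sqrt lam * (z - x).
set w2 := del * (t - u) - 2 * Num.sqrt lam * (y - z).
have -> : del * (u - s + (t - u)) - 2 * Num.sqrt lam * (z - x + (y - z)) = w1 + w2.
  by rewrite /w1 /w2; ring.
have [T10 T20 Z10 Z20] : [/\ 0 < u - s, 0 < t - u, 0 < z - x & 0 < y - z].
  by rewrite !subr_gt0.
have hL := log_rho_3P w1 w2 a0 ab T10 T20 Z10 Z20.
apply: le_trans (ler_wpM2l _ (expRD_max_le _ _ _)); last first.
  by rewrite mulr_ge0 ?expR_ge0 // ltW.
by rewrite -[Dconst a b]lnK ?posrE // -!expRD ler_expR; lra.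
Qed.

Lemma rho_3P_integral_le (a b s t x y : R) (q : R * R -> \bar R) :
  0 < a -> a < b -> (forall uz, (0 <= q uz)%E) ->
  (\int[lebesgue_measure]_(u in `[s, t]) \int[lebesgue_measure]_(z in [set: R])
     ((rho lam del b s x u z)%:E * q (u, z) * (rho lam del a u z t y)%:E)
   <= (Dconst a b * rho lam del a s x t y)%:E *
      \int[lebesgue_measure]_(u in `[s, t]) \int[lebesgue_measure]_(z in [set: R])
        ((rho lam del (b - a) s x u z + rho lam del a u z t y)%:E * q (u, z)))%E.
Proof.
move=> a0 ab q0; have ba0 : 0 < b - a by rewrite subr_gt0.
have r0 c s' x' t' y' : 0 < c -> (0 <= (rho lam del c s' x' t' y')%:E)%E.
  by move=> c0; rewrite lee_fin rho_ge0.
have Dr0 : 0 <= Dconst a b * rho lam del a s x t y.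
  by rewrite mulr_ge0 ?rho_ge0 // ltW // Dconst_gt0.
apply: integral_le_scale_ge0 => // [u _|u _|u _].
- by apply: integral_ge0 => z _; rewrite !mule_ge0 ?r0 // (lt_trans a0).
- by apply: integral_ge0 => z _; rewrite mule_ge0 // lee_fin addr_ge0 ?rho_ge0.
apply: integral_le_scale_ge0 => // [z _|z _|z _].
- by rewrite !mule_ge0 ?r0 // (lt_trans a0).
- by rewrite mule_ge0 // lee_fin addr_ge0 ?rho_ge0.
rewrite muleAC -EFinM muleA -EFinM lee_wpmul2r // lee_fin.
exact: rho_3P.
Qed.

End Kernel.

Theorem corollary2p3 (R : realType) (lam del a b eta : R) (Q : R -> R -> R)
    (q : R * R -> \bar R) :
  0 <= lam -> 0 < del -> 0 < a -> a < b -> 0 <= eta ->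
  regular_superadditive Q ->
  (forall uz, (0 <= q uz)%E) -> measurable_fun [set: R * R] q ->
  (forall s t x y, s < t -> x < y ->
    ((Dconst a b)%:E *
      \int[lebesgue_measure]_(u in `[s, t])
        \int[lebesgue_measure]_(z in [set: R])
          (((rho lam del (b - a) s x u z + rho lam del a u z t y)%:E) * q (u, z))
     <= (eta + Q s t)%:E)%E) ->
  in_N (rho lam del b) (rho lam del a) (Num.sqrt (b / a)) eta Q q.
Proof.
move=> _ del0 a0 ab eta0 hQ q0 mq hyp; split => //.
- split => //; have ba1 : 1 <= b / a by rewrite ler_pdivlMr // mul1r ltW.
  by rewrite -{1}sqrtr1 ler_sqrt // (le_trans ler01 ba1).
- move=> s t x y st; apply: le_trans (rho_3P_integral_le lam del0 s t x y a0 ab q0) _.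
  have [xy|yx] := boolP (x < y); last first.
    by rewrite rho_eq0 ?yx ?orbT // mulr0 mul0e mule0.
  by rewrite EFinM muleAC lee_wpmul2r ?lee_fin ?rho_ge0 // hyp.
- by move=> s x t y; rewrite rho_le_sqrt_ratio // ltW.
Qed.
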